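(* Let $\mathbf{A}\in\mathbb{R}^{m\times n}$, let $l$ be a positive integer with $l<m$, let $\alpha$ be a real number with $0<\alpha\le\sigma_l(\mathbf{A}\mathbf{A}^{\mathrm{T}})/2$, and let $i\le l$. Then $\sigma_i(\mathbf{A}\mathbf{A}^{\mathrm{T}}-\alpha\mathbf{I})=\sigma_i(\mathbf{A}\mathbf{A}^{\mathrm{T}})-\alpha$. Moreover, if $\sigma_i(\mathbf{A}\mathbf{A}^{\mathrm{T}}-\alpha\mathbf{I})\neq\sigma_{l+1}(\mathbf{A}\mathbf{A}^{\mathrm{T}}-\alpha\mathbf{I})$, then the left singular vectors of $\mathbf{A}\mathbf{A}^{\mathrm{T}}-\alpha\mathbf{I}$ corresponding to its $i$-th largest singular value are exactly the left singular vectors of $\mathbf{A}\mathbf{A}^{\mathrm{T}}$ corresponding to its $i$-th largest singular value.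
   Context: $\sigma_i(\cdot)$ denotes the $i$-th largest singular value of a matrix; $\mathbf{I}$ is the $m\times m$ identity matrix. *)

From HB Require Import structures.
From mathcomp Require Import all_boot all_order all_algebra.
From mathcomp Require Import boolp classical_sets reals.
Set Implicit Arguments. Unset Strict Implicit. Unset Printing Implicit Defensive.
Import Order.TTheory GRing.Theory Num.Theory.
Local Open Scope ring_scope.

Definition is_svd (R : realType) (m : nat) (M : 'M[R]_m)
    (U : 'M[R]_m) (d : 'rV[R]_m) (V : 'M[R]_m) : Prop :=
  [/\ U^T *m U = 1%:M, V^T *m V = 1%:M,
      (forall k : 'I_m, 0 <= d 0 k),
      (forall k l : 'I_m, (k <= l)%N -> d 0 l <= d 0 k) &
      M = U *m diag_mx d *m V^T].

(* The vector of singular values (in nonincreasing order): the diagonal of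
   any SVD of M (it is uniquely determined); chosen classically. *)
Definition singvals (R : realType) (m : nat) (M : 'M[R]_m) : 'rV[R]_m :=
  xget 0 [set d | exists U V, is_svd M U d V].

(* sigma M i = i-th largest singular value of M, 1-indexed (1 <= i <= m);
   0 outside that range (never used). *)
Definition sigma (R : realType) (m : nat) (M : 'M[R]_m) (i : nat) : R :=
  match @insub nat (fun k => (k < m)%N) 'I_m i.-1 with
  | Some k => singvals M 0 k
  | None => 0
  end.

Definition left_singular_vector (R : realType) (m : nat) (M : 'M[R]_m)
    (s : R) (u : 'cV[R]_m) : Prop :=
  u^T *m u = 1%:M /\
  exists v : 'cV[R]_m, [/\ v^T *m v = 1%:M, M *m v = s *: u & M^T *m u = s *: v].

(* A A^T is symmetric positive semidefinite, so any SVD of it is an orthogonal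
   diagonalisation U diag(d) U^T; hence A A^T - alpha I = U diag(d - alpha) U^T
   and its singular values are the numbers |d_k - alpha| sorted decreasingly.
   When 2 alpha <= d_l, the l largest of these are d_1 - alpha, ..., d_l - alpha,
   in this order (singular values of B are unique: their squares are the
   eigenvalues of B B^T).
   For a symmetric N, a left singular vector u for s satisfies N^2 u = s^2 u,
   so N u - s u is an eigenvector of N for -s unless it is zero. For
   N = A A^T - alpha I and s = d_i - alpha, the value -s is an eigenvalue of N
   only if d_i = 2 alpha and 0 is an eigenvalue of A A^T; but then
   alpha = |0 - alpha| is among the trailing singular values of N, which
   forces sigma_(l+1)(N) = sigma_i(N). *)

From HB Require Import structures.
From mathcomp Require Import all_boot all_order all_algebra.
From mathcomp Require Import boolp classical_sets reals.
From mathcomp Require Import perm lra.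
Import Order.TTheory GRing.Theory Num.Theory.
Local Open Scope ring_scope.
Set Implicit Arguments. Unset Strict Implicit. Unset Printing Implicit Defensive.

Section SortCat.
Variables (T : eqType) (leT : rel T).
Hypotheses (leT_total : total leT) (leT_tr : transitive leT)
  (leT_asym : antisymmetric leT).

Lemma sort_cat_sorted (s1 s2 : seq T) : sorted leT s1 -> allrel leT s1 s2 ->
  sort leT (s1 ++ s2) = s1 ++ sort leT s2.
Proof.
move=> s1_sorted s12; apply: (sorted_eq leT_tr leT_asym); first exact: sort_sorted.
  rewrite sorted_pairwise // pairwise_cat -!sorted_pairwise // s1_sorted.
  by rewrite (sort_sorted leT_total) (eq_allrel_memr _ _ (mem_sort _ _)) s12.
by rewrite perm_sort perm_cat2l perm_sym perm_sort.
Qed.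

End SortCat.

Section Psd.
Variables (R : realFieldType) (m : nat).
Implicit Types (M : 'M[R]_m) (u w x : 'cV[R]_m).

Lemma mulmx_tr_self_ge0 n (x : 'cV[R]_n) : 0 <= (x^T *m x) 0 0.
Proof. by rewrite mxE sumr_ge0 // => k _; rewrite mxE -expr2 sqr_ge0. Qed.

Lemma mulmx_tr_self_eq0 n (x : 'cV[R]_n) : ((x^T *m x) 0 0 == 0) = (x == 0).
Proof.
apply/idP/eqP => [|->]; last by rewrite mulmx0 mxE.
rewrite mxE psumr_eq0 => [/allP x0|k _]; last by rewrite mxE -expr2 sqr_ge0.
apply/colP => k; have /implyP := x0 k (mem_index_enum k).
by rewrite mxE -expr2 sqrf_eq0 => /(_ isT)/eqP ->; rewrite mxE.
Qed.

Definition psdmx M := forall x, 0 <= (x^T *m M *m x) 0 0.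

Lemma psdmx_mul_tr n (A : 'M[R]_(m, n)) : psdmx (A *m A^T).
Proof.
move=> x; have -> : x^T *m (A *m A^T) *m x = (A^T *m x)^T *m (A^T *m x).
  by rewrite trmx_mul trmxK !mulmxA.
exact: mulmx_tr_self_ge0.
Qed.

Lemma psdmx_eigenvalue_ge0 M a : psdmx M -> eigenvalue M a -> 0 <= a.
Proof.
move=> M_psd /eigenvalueP[v vM v_neq0].
have := M_psd v^T; rewrite trmxK vM -scalemxAl mxE.
have : 0 < (v^T^T *m v^T) 0 0.
  by rewrite lt0r mulmx_tr_self_eq0 trmx_eq0 v_neq0 mulmx_tr_self_ge0.
by rewrite trmxK => /pmulr_lge0 ->.
Qed.

Lemma eigenvalue_sym_col M a w :
  M^T = M -> M *m w = a *: w -> w != 0 -> eigenvalue M a.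
Proof.
move=> M_sym Mw w_neq0; apply/eigenvalueP; exists w^T; last by rewrite trmx_eq0.
by rewrite -{1}M_sym -trmx_mul Mw linearZ.
Qed.

Lemma eigenvalue_sub_scalar M a b : eigenvalue (M - a%:M) b = eigenvalue M (b + a).
Proof. by rewrite /eigenvalue /eigenspace [(b + a)%:M]raddfD opprD addrA addrAC. Qed.

(* w = M u - s u satisfies M w = - s w. *)
Lemma eigenvector_of_sqr M s u : M^T = M -> ~~ eigenvalue M (- s) ->
  M *m (M *m u) = s ^+ 2 *: u -> M *m u = s *: u.
Proof.
move=> M_sym no_eig MMu; apply/eqP; rewrite -subr_eq0.
apply: contraNT no_eig => w_neq0; apply: (eigenvalue_sym_col M_sym _ w_neq0).
by rewrite mulmxBr MMu -scalemxAr scalerBr scalerA mulNr -expr2 !scaleNr opprK addrC.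
Qed.

Lemma sym_sqr_kernel M u : M^T = M -> M *m (M *m u) = 0 -> M *m u = 0.
Proof.
move=> M_sym MMu; apply/eqP; rewrite -mulmx_tr_self_eq0.
by rewrite trmx_mul M_sym -mulmxA MMu mulmx0 mxE.
Qed.

Lemma psdmx_eigenvector_of_sqr M s u : M^T = M -> psdmx M -> 0 <= s ->
  M *m (M *m u) = s ^+ 2 *: u -> M *m u = s *: u.
Proof.
move=> M_sym M_psd; rewrite le0r => /predU1P[->|s_gt0] MMu.
  by rewrite scale0r; apply: sym_sqr_kernel => //; rewrite MMu expr0n scale0r.
apply: eigenvector_of_sqr => //; apply/negP => /(psdmx_eigenvalue_ge0 M_psd).
by rewrite oppr_ge0 leNgt s_gt0.
Qed.

End Psd.

Section RowSeq.
Variables (T : Type) (n : nat).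
Implicit Types r : 'rV[T]_n.

Definition rowseq r : n.-tuple T := [tuple r 0 k | k < n].

Lemma tnth_rowseq r k : tnth (rowseq r) k = r 0 k.
Proof. exact: tnth_mktuple. Qed.

Lemma nth_rowseq r x0 (k : 'I_n) : nth x0 (rowseq r) k = r 0 k.
Proof. by rewrite -tnth_nth tnth_rowseq. Qed.

Lemma rowseqE r : rowseq r = map (r 0) (enum 'I_n) :> seq T.
Proof. by []. Qed.

Lemma rowseq_inj : injective rowseq.
Proof. by move=> r1 r2 r12; apply/rowP => k; rewrite -!tnth_rowseq r12. Qed.

Lemma mem_take_enum_ord l (k : 'I_n) : (k \in take l (enum 'I_n)) = (k < l)%N.
Proof.
by rewrite -(mem_map val_inj) map_take val_enum_ord take_iota mem_iota leq_min ltn_ord andbT.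
Qed.

Lemma mem_drop_enum_ord l (k : 'I_n) : (k \in drop l (enum 'I_n)) = (l <= k)%N.
Proof.
rewrite -(mem_map val_inj) map_drop val_enum_ord drop_iota mem_iota.
by rewrite -maxnE leq_max ltn_ord orbT andbT.
Qed.

Lemma take_rowseq r l : take l (rowseq r) = [seq r 0 k | k <- take l (enum 'I_n)].
Proof. by rewrite rowseqE map_take. Qed.

Lemma drop_rowseq r l : drop l (rowseq r) = [seq r 0 k | k <- drop l (enum 'I_n)].
Proof. by rewrite rowseqE map_drop. Qed.

End RowSeq.

Lemma rowseq_nonincreasingP (R : numDomainType) n (r : 'rV[R]_n) :
  (forall k l : 'I_n, (k <= l)%N -> r 0 l <= r 0 k) <-> sorted >=%R (rowseq r).
Proof.
split=> [r_noninc|r_sorted k l kl].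
  apply/(sortedP 0) => i; rewrite size_tuple => i_lt.
  rewrite -[i]/(nat_of_ord (Ordinal (ltnW i_lt))) -[i.+1]/(nat_of_ord (Ordinal i_lt)).
  by rewrite !nth_rowseq; apply: r_noninc => /=.
rewrite -!(nth_rowseq r 0).
by apply: (sorted_leq_nth ge_trans lexx 0 r_sorted); rewrite ?inE ?size_tuple.
Qed.

Section CharPoly.
Variables (R : comNzRingType) (m : nat).
Implicit Types (U X : 'M[R]_m) (d : 'rV[R]_m).

Lemma char_poly_orthogonal_conj U X :
  U *m U^T = 1%:M -> char_poly (U *m X *m U^T) = char_poly X.
Proof.
move=> UU; rewrite /char_poly; pose Up := map_mx polyC U.
have UpUp : Up *m Up^T = 1%:M by rewrite map_trmx -map_mxM UU map_mx1.
have -> : char_poly_mx (U *m X *m U^T) = Up *m char_poly_mx X *m Up^T.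
  rewrite /char_poly_mx mulmxBr mulmxBl mul_mx_scalar -scalemxAl UpUp scalemx1.
  by rewrite !map_mxM map_trmx.
have dUp : \det Up * \det Up = 1 by rewrite -{2}det_tr -det_mulmx UpUp det1.
by rewrite !det_mulmx det_tr mulrAC dUp mul1r.
Qed.

Lemma char_poly_diag d : char_poly (diag_mx d) = \prod_(x <- rowseq d) ('X - x%:P).
Proof.
rewrite char_poly_trig ?diag_mx_is_trig // (big_tuple _ _ (rowseq d)).
by apply: eq_bigr => k _; rewrite tnth_rowseq !mxE eqxx mulr1n.
Qed.

End CharPoly.

Lemma eigenvalue_orthogonal_diag (R : fieldType) m (U : 'M[R]_m) d a :
  U *m U^T = 1%:M -> eigenvalue (U *m diag_mx d *m U^T) a -> a \in rowseq d.
Proof.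
move=> UU; rewrite eigenvalue_root_char char_poly_orthogonal_conj //.
by rewrite char_poly_diag root_prod_XsubC.
Qed.

Section SingularValues.
Variables (R : realType) (m : nat).
Implicit Types (M U V W : 'M[R]_m) (u : 'cV[R]_m) (c d e : 'rV[R]_m).

Lemma left_singular_vector_sym M s u : M^T = M -> ~~ eigenvalue M (- s) ->
  left_singular_vector M s u <-> u^T *m u = 1%:M /\ M *m u = s *: u.
Proof.
move=> M_sym no_eig; split=> [[uu [v [_ Mv Mu]]]|[uu Mu]]; last first.
  by split=> //; exists u; rewrite M_sym.
split=> //; apply: eigenvector_of_sqr => //.
by rewrite -{2}M_sym Mu -scalemxAr Mv scalerA expr2.
Qed.

Lemma svd_char_poly M U d V : is_svd M U d V ->
  char_poly (M *m M^T) = \prod_(x <- rowseq (map_mx (fun x => x ^+ 2) d)) ('X - x%:P).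
Proof.
move=> [UU VV _ _ ->]; rewrite -char_poly_diag -(char_poly_orthogonal_conj _ (mulmx1C UU)).
rewrite !trmx_mul trmxK tr_diag_mx !mulmxA -(mulmxA _ V^T) VV mulmx1 -(mulmxA U) mulmx_diag.
by congr (char_poly (U *m diag_mx _ *m U^T)); apply/rowP => k; rewrite !mxE expr2.
Qed.

Lemma svd_unique M U1 d1 V1 U2 d2 V2 :
  is_svd M U1 d1 V1 -> is_svd M U2 d2 V2 -> d1 = d2.
Proof.
move=> svd1 svd2; have := svd_char_poly svd2.
rewrite (svd_char_poly svd1) => /prod_XsubC_eq sqr_perm.
case: svd1 svd2 => [_ _ d1_ge0 d1_sorted _] [_ _ d2_ge0 d2_sorted _].
have sqr_sorted d : (forall k, 0 <= d 0 k) -> (forall k l : 'I_m, (k <= l)%N -> d 0 l <= d 0 k) ->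
    sorted >=%R (rowseq (map_mx (fun x => x ^+ 2) d)).
  move=> d_ge0 d_sorted; apply/rowseq_nonincreasingP => k l kl.
  by rewrite !mxE lerXn2r ?nnegrE ?d_sorted.
have /val_inj/rowseq_inj/rowP sqr_eq := sorted_eq ge_trans ge_anti (sqr_sorted _ d1_ge0 d1_sorted)
  (sqr_sorted _ d2_ge0 d2_sorted) sqr_perm.
apply/rowP => k; apply/eqP; rewrite -(eqrXn2 (ltn0Sn 1)) //.
by have := sqr_eq k; rewrite !mxE => ->.
Qed.

Lemma singvals_svd M U d V : is_svd M U d V -> singvals M = d.
Proof.
move=> svdM; rewrite /singvals; apply: (xget_unique _ (x := d)); first by exists U, V.
by move=> e [U' [V' svd']]; exact: svd_unique svd' svdM.
Qed.

Lemma svd_singvals M : singvals M != 0 -> exists U V, is_svd M U (singvals M) V.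
Proof.
move=> nz; apply: (@xgetPex _ 0 [set d | exists U V, is_svd M U d V]).
apply: contrapT => no_svd; move: nz; rewrite /singvals xgetPN ?eqxx //.
by move=> d svd_d; apply: no_svd; exists d.
Qed.

Lemma singvals_nonincreasing M (k l : 'I_m) : (k <= l)%N -> singvals M 0 l <= singvals M 0 k.
Proof.
rewrite /singvals; case: xgetP => [d _ [U [V [_ _ _ d_sorted _]]]|_]; first exact: d_sorted.
by rewrite !mxE.
Qed.

Lemma sigmaE M (k : 'I_m) : sigma M k.+1 = singvals M 0 k.
Proof.
rewrite /sigma /=; case: insubP => [k' _ k'k|]; last by rewrite ltn_ord.
by congr (singvals M 0 _); apply: val_inj.
Qed.

Lemma col_mulmx n p (A : 'M[R]_(n, m)) (B : 'M[R]_(m, p)) k : col k (A *m B) = A *m col k B.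
Proof. by rewrite !colE mulmxA. Qed.

Lemma col_mul_diag n (A : 'M[R]_(n, m)) d k : col k (A *m diag_mx d) = d 0 k *: col k A.
Proof. by apply/colP => i; rewrite mul_mx_diag !mxE mulrC. Qed.

(* M^2 = M M^T = U diag(d)^2 U^T, so each column of U is an eigenvector of M^2,
   hence of the psd M. *)
Lemma svd_psd_sym M U d V : M^T = M -> psdmx M -> is_svd M U d V ->
  M = U *m diag_mx d *m U^T.
Proof.
move=> M_sym M_psd [UU VV d_ge0 _ M_def].
have MMU : M *m M *m U = U *m diag_mx d *m diag_mx d.
  rewrite -{2}M_sym {1}M_def M_def !trmx_mul trmxK tr_diag_mx !mulmxA.
  by rewrite -(mulmxA _ V^T) VV mulmx1 -!mulmxA UU mulmx1.
have MU_col k : M *m col k U = d 0 k *: col k U.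
  apply: psdmx_eigenvector_of_sqr => //.
  by rewrite -!col_mulmx mulmxA MMU !col_mul_diag scalerA expr2.
have MU : M *m U = U *m diag_mx d.
  apply/matrixP => i k; move/colP/(_ i): (MU_col k).
  by rewrite -col_mulmx -col_mul_diag !mxE.
by rewrite -MU -mulmxA (mulmx1C UU) mulmx1.
Qed.

Definition sign_row c : 'rV[R]_m := \row_k (if 0 <= c 0 k then 1 else -1).

Lemma svd_orthogonal_diag W c e (s : 'S_m) : W^T *m W = 1%:M ->
  (forall k, e 0 k = `|c 0 (s k)|) -> (forall k l : 'I_m, (k <= l)%N -> e 0 l <= e 0 k) ->
  is_svd (W *m diag_mx c *m W^T) (col_perm s W) e (col_perm s (W *m diag_mx (sign_row c))).
Proof.
move=> WW e_def e_sorted; pose P : 'M[R]_m := perm_mx s^-1.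
have PT : P^T = perm_mx s by rewrite tr_perm_mx invgK.
have PTP : P^T *m P = 1%:M by rewrite PT -perm_mxM mulgV perm_mx1.
have SS : diag_mx (sign_row c) *m diag_mx (sign_row c) = 1%:M.
  rewrite mulmx_diag; apply/matrixP => i j; rewrite !mxE.
  by case: (i == j) => //=; case: ifP => _; rewrite ?mulr1 // mulrNN mulr1.
have PeP : P *m diag_mx e *m P^T = diag_mx (map_mx Num.norm c).
  rewrite -row_permE PT -[perm_mx s](congr1 perm_mx (invgK s)) -col_permE.
  by apply/matrixP => i j; rewrite !mxE (inj_eq perm_inj) e_def permKV.
have cS : diag_mx (map_mx Num.norm c) *m diag_mx (sign_row c) = diag_mx c.
  rewrite mulmx_diag; congr diag_mx; apply/rowP => k; rewrite !mxE.
  case: ifP => [c_ge0|c_lt0]; first by rewrite mulr1 ger0_norm.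
  by rewrite mulrN1 ltr0_norm ?opprK // ltNge c_lt0.
rewrite !col_permE -/P; split=> //.
- by rewrite trmx_mul -mulmxA (mulmxA W^T) WW mul1mx PTP.
- rewrite !trmx_mul tr_diag_mx -!mulmxA (mulmxA W^T) WW mul1mx.
  by rewrite (mulmxA (diag_mx _)) SS mul1mx PTP.
- by move=> k; rewrite e_def normr_ge0.
rewrite !trmx_mul tr_diag_mx !mulmxA -(mulmxA W P) -(mulmxA W (P *m _)) PeP.
by rewrite -(mulmxA W _ (diag_mx (sign_row c))) cS.
Qed.

Lemma singvals_orthogonal_diag W c : W^T *m W = 1%:M ->
  rowseq (singvals (W *m diag_mx c *m W^T)) = sort >=%R (rowseq (map_mx Num.norm c)) :> seq R.
Proof.
move=> WW; set a := rowseq (map_mx _ c).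
have /tuple_permP[s sort_a] : perm_eq (sort >=%R a) a by rewrite perm_sort.
pose e : 'rV[R]_m := \row_k tnth a (s k).
have rowseq_e : rowseq e = sort >=%R a :> seq R.
  by rewrite sort_a; congr val; apply: eq_mktuple => k; rewrite /e mxE.
have e_sorted : forall k l : 'I_m, (k <= l)%N -> e 0 l <= e 0 k.
  by apply/rowseq_nonincreasingP; rewrite rowseq_e (sort_sorted ge_total).
have e_def k : e 0 k = `|c 0 (s k)| by rewrite /e mxE tnth_rowseq mxE.
by rewrite (singvals_svd (svd_orthogonal_diag WW e_def e_sorted)) rowseq_e.
Qed.

End SingularValues.

Lemma norm_shift_head (R : realFieldType) (a x : R) : 0 < a -> 2 * a <= x -> `|x - a| = x - a.
Proof. by move=> a_gt0 x_ge; rewrite ger0_norm // subr_ge0; lra. Qed.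

Lemma norm_shift_tail (R : realFieldType) (a x y : R) :
  0 <= y <= x -> 2 * a <= x -> `|y - a| <= x - a.
Proof. by case/andP=> y_ge0 yx x_ge; rewrite ler_norml; apply/andP; split; lra. Qed.

Section Shift.
Variables (R : realType) (m : nat) (M U : 'M[R]_m) (d : 'rV[R]_m) (alpha : R) (l : nat).
Hypotheses (M_psd : psdmx M) (UU : U^T *m U = 1%:M) (M_def : M = U *m diag_mx d *m U^T).
Hypotheses (d_ge0 : forall k, 0 <= d 0 k)
  (d_sorted : forall k k' : 'I_m, (k <= k')%N -> d 0 k' <= d 0 k).
Hypotheses (alpha_gt0 : 0 < alpha) (l_lt_m : (l < m)%N)
  (d_head : forall k : 'I_m, (k < l)%N -> 2 * alpha <= d 0 k).

Let c := map_mx (fun x => x - alpha) d.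
Let a := rowseq (map_mx Num.norm c).

Lemma shift_orthogonal_diag : M - alpha%:M = U *m diag_mx c *m U^T.
Proof.
have -> : diag_mx c = diag_mx d - alpha%:M.
  by apply/matrixP => i j; rewrite !mxE; case: eqVneq; rewrite ?mulr1n ?mulr0n ?subr0.
by rewrite mulmxBr mulmxBl -M_def mul_mx_scalar -scalemxAl (mulmx1C UU) scalemx1.
Qed.

Lemma rowseq_singvals_shift :
  rowseq (singvals (M - alpha%:M)) = take l a ++ sort >=%R (drop l a) :> seq R.
Proof.
rewrite shift_orthogonal_diag singvals_orthogonal_diag //.
transitivity (sort >=%R (take l a ++ drop l a)); first by rewrite cat_take_drop.
apply: sort_cat_sorted; [exact: ge_total | exact: ge_trans | exact: ge_anti | |].
  have -> : take l a = take l (rowseq c).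
    rewrite !take_rowseq; apply/eq_in_map => k; rewrite mem_take_enum_ord => kl.
    by rewrite !mxE norm_shift_head ?d_head.
  apply: take_sorted; apply/rowseq_nonincreasingP => k k' kk'.
  by rewrite !mxE lerD2r d_sorted.
apply/allrelP => x y; rewrite take_rowseq drop_rowseq.
move=> /mapP[k + ->] /mapP[j + ->]; rewrite mem_take_enum_ord mem_drop_enum_ord => kl lj.
rewrite !mxE norm_shift_head ?d_head //; apply: norm_shift_tail; last exact: d_head.
by rewrite d_ge0 (d_sorted (leq_trans (ltnW kl) lj)).
Qed.

Lemma singvals_shift_head (k : 'I_m) : (k < l)%N -> singvals (M - alpha%:M) 0 k = d 0 k - alpha.
Proof.
move=> kl; rewrite -(nth_rowseq (singvals _) 0) rowseq_singvals_shift nth_cat.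
rewrite size_takel ?size_tuple ?(ltnW l_lt_m) // kl nth_take // nth_rowseq !mxE.
by rewrite norm_shift_head ?d_head.
Qed.

Lemma singvals_shift_tail (j : 'I_m) : (l <= j)%N ->
  `|d 0 j - alpha| <= singvals (M - alpha%:M) 0 (Ordinal l_lt_m).
Proof.
move=> lj; rewrite -(nth_rowseq (singvals _) 0) -[nat_of_ord _]/l rowseq_singvals_shift nth_cat.
rewrite size_takel ?size_tuple ?(ltnW l_lt_m) // ltnn subnn.
have : `|d 0 j - alpha| \in sort >=%R (drop l a).
  by rewrite mem_sort drop_rowseq; apply/mapP; exists j; rewrite ?mem_drop_enum_ord ?mxE.
case/(nthP 0)=> q q_lt <-.
apply: (sorted_leq_nth ge_trans lexx 0 (sort_sorted ge_total _)); rewrite ?inE //.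
exact: leq_ltn_trans q_lt.
Qed.

(* Positive semidefiniteness forces d_k = 2 alpha, so 0 is an eigenvalue of M:
   some d_j = 0, necessarily with j >= l, and alpha = |d_j - alpha| is then a
   trailing singular value of M - alpha I. *)
Lemma singvals_shift_collision (k : 'I_m) : (k < l)%N ->
  eigenvalue (M - alpha%:M) (- (d 0 k - alpha)) ->
  singvals (M - alpha%:M) 0 k = singvals (M - alpha%:M) 0 (Ordinal l_lt_m).
Proof.
rewrite eigenvalue_sub_scalar => kl eig.
have sl_le := singvals_nonincreasing (M - alpha%:M) (ltnW kl : (k <= Ordinal l_lt_m)%N).
rewrite (singvals_shift_head kl) in sl_le *.
have eig_ge0 := psdmx_eigenvalue_ge0 M_psd eig; have dk_ge := d_head kl.
(* lra does not identify the differently elaborated occurrences of [d 0 k]. *)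
set x := d 0 k in eig eig_ge0 dk_ge sl_le *.
have x2 : x = 2 * alpha by lra.
have /eigenvalue_orthogonal_diag : eigenvalue (U *m diag_mx d *m U^T) 0.
  by rewrite -M_def (_ : 0 = - (x - alpha) + alpha) // x2; lra.
case/(_ (mulmx1C UU))/mapP=> j _ dj0.
have lj : (l <= j)%N.
  rewrite leqNgt; apply/negP => /d_head; rewrite -dj0 leNgt pmulr_rgt0 //.
  by rewrite alpha_gt0.
have := singvals_shift_tail lj; rewrite -dj0 sub0r normrN gtr0_norm // => sl_ge.
lra.
Qed.

Lemma left_singular_vector_shift (k : 'I_m) u : (k < l)%N ->
  singvals (M - alpha%:M) 0 k != singvals (M - alpha%:M) 0 (Ordinal l_lt_m) ->
  left_singular_vector (M - alpha%:M) (d 0 k - alpha) u <-> left_singular_vector M (d 0 k) u.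
Proof.
move=> kl sk_neq_sl.
have M_sym : M^T = M by rewrite M_def !trmx_mul trmxK tr_diag_mx mulmxA.
have N_sym : (M - alpha%:M)^T = M - alpha%:M by rewrite linearB /= M_sym tr_scalar_mx.
have dk_gt0 : 0 < d 0 k by apply: lt_le_trans (d_head kl); rewrite pmulr_rgt0.
have no_eig_M : ~~ eigenvalue M (- d 0 k).
  by apply/negP => /(psdmx_eigenvalue_ge0 M_psd); rewrite oppr_ge0 leNgt dk_gt0.
have no_eig_N : ~~ eigenvalue (M - alpha%:M) (- (d 0 k - alpha)).
  by apply: contra sk_neq_sl => /(singvals_shift_collision kl) ->.
apply: iff_trans (left_singular_vector_sym _ N_sym no_eig_N) _.
apply: iff_sym; apply: iff_trans (left_singular_vector_sym _ M_sym no_eig_M) _.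
rewrite mulmxBl mul_scalar_mx scalerBl.
by split=> -[uu Mu]; split=> //; [rewrite Mu | apply: (addIr (- (alpha *: u)))].
Qed.

End Shift.

Unset Implicit Arguments.

Theorem proposition2 (R : realType) (m n : nat) (A : 'M[R]_(m, n))
    (l : nat) (alpha : R) (i : nat) :
  (0 < l)%N -> (l < m)%N ->
  0 < alpha -> alpha <= sigma (A *m A^T) l / 2 ->
  (1 <= i)%N -> (i <= l)%N ->
  sigma (A *m A^T - alpha%:M) i = sigma (A *m A^T) i - alpha /\
  (sigma (A *m A^T - alpha%:M) i != sigma (A *m A^T - alpha%:M) l.+1 ->
   forall u : 'cV[R]_m,
     left_singular_vector (A *m A^T - alpha%:M) (sigma (A *m A^T - alpha%:M) i) u
     <-> left_singular_vector (A *m A^T) (sigma (A *m A^T) i) u).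
Proof.
move=> l_gt0 l_lt_m alpha_gt0 alpha_le i_gt0 i_le_l.
set M := A *m A^T in alpha_le *.
have l1_lt_m : (l.-1 < m)%N by rewrite prednK // ltnW.
have sigma_l : sigma M l = singvals M 0 (Ordinal l1_lt_m) by rewrite -sigmaE prednK.
have [U [V svdM]] : exists U V, is_svd M U (singvals M) V.
  apply: svd_singvals; apply: contraTneq alpha_le => sv0.
  by rewrite sigma_l sv0 mxE mul0r -ltNge.
have [UU _ d_ge0 d_sorted _] := svdM.
have M_psd : psdmx M := psdmx_mul_tr A.
have M_sym : M^T = M by rewrite trmx_mul trmxK.
have M_def := svd_psd_sym M_sym M_psd svdM.
have d_head (k : 'I_m) : (k < l)%N -> 2 * alpha <= singvals M 0 k.
  move=> kl; have kl1 : (k <= Ordinal l1_lt_m)%N by rewrite /= -ltnS prednK.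
  by apply: le_trans (d_sorted _ _ kl1); rewrite -sigma_l mulrC -ler_pdivlMr.
have i1_lt_m : (i.-1 < m)%N by apply: leq_ltn_trans (leq_pred i) (leq_ltn_trans i_le_l l_lt_m).
have i1_lt_l : (Ordinal i1_lt_m < l)%N by rewrite /= prednK.
have -> : i = (Ordinal i1_lt_m).+1 by rewrite /= prednK.
rewrite -[l.+1]/((Ordinal l_lt_m).+1) !sigmaE.
have head_i := singvals_shift_head UU M_def d_ge0 d_sorted alpha_gt0 l_lt_m d_head i1_lt_l.
split=> [|neq u]; rewrite head_i //.
exact: (left_singular_vector_shift M_psd UU M_def d_ge0 d_sorted alpha_gt0 d_head u i1_lt_l neq).
Qed.
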